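(* Let $n$ be a nonnegative integer and let $x$ be a complex number such that no denominator below vanishes. Then \[ \sum_{k=0}^{n}(-1)^k\binom{n}{k} \frac{\binom{\frac{x}{2}+k}{k}^2\binom{x-\frac{1}{2}+k}{k}} {\binom{\frac{x-1}{2}+k}{k}^2\binom{x-\frac{1}{2}+n+k}{k}} \frac{1+2x+4k}{1+2x+2n+2k}H_{2k}^2(x) =\frac{1}{4}\frac{\binom{x-\frac{1}{2}+n}{n}\binom{-\frac{3}{2}+n}{n}} {\binom{\frac{x-1}{2}+n}{n}^2} \big\{\big[H_n(\tfrac{x-1}{2})-H_n(-\tfrac{3}{2})\big]^2-H_{n}^{\langle2\rangle}(-\tfrac{3}{2})\big\}, \] where $H_{2k}^2(x)$ denotes $(H_{2k}(x))^2$.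
   Context: For complex $z$ and a nonnegative integer $k$, $\binom{z}{k}=\frac{z(z-1)\cdots(z-k+1)}{k!}$ (with $\binom{z}{0}=1$). For complex $x$ and nonnegative integer $m$, $H_0(x)=0$, $H_m(x)=\sum_{j=1}^m\frac{1}{x+j}$, $H_0^{\langle2\rangle}(x)=0$ and $H_m^{\langle2\rangle}(x)=\sum_{j=1}^m\frac{1}{(x+j)^2}$ for $m\ge1$. The parameter $x$ is assumed to be such that all denominators are nonzero. *)

From mathcomp Require Import all_boot all_order all_algebra.
From mathcomp Require Import reals complex.
Set Implicit Arguments. Unset Strict Implicit. Unset Printing Implicit Defensive.
Import Order.TTheory GRing.Theory Num.Theory.
Local Open Scope ring_scope.

Definition gbinom (F : fieldType) (z : F) (k : nat) : F :=
  (\prod_(i < k) (z - i%:R)) / (k`!)%:R.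

Definition Hsum (F : fieldType) (m : nat) (x : F) : F :=
  \sum_(1 <= j < m.+1) (x + j%:R)^-1.

Definition Hsum2 (F : fieldType) (m : nat) (x : F) : F :=
  \sum_(1 <= j < m.+1) ((x + j%:R) ^+ 2)^-1.

From HB Require Import structures.
From mathcomp Require Import all_boot all_order all_algebra.
From mathcomp Require Import reals complex.
From mathcomp Require Import ring zify.
Set Implicit Arguments. Unset Strict Implicit. Unset Printing Implicit Defensive.
Import Order.TTheory GRing.Theory Num.Theory.
Local Open Scope ring_scope.

(* Both sides are, up to a factor 4, the coefficient of eps*del in Dougall's terminating
   very-well-poised 5F4 sum
     sum_k (a-n+2k) (-1)^k C(n,k) (a-n)_k (b-n)_k (c-n)_k / ((a)_(k+1) (1+a-b)_k (1+a-c)_k)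
       = (a-n)_n (1+a-b-c+n)_n / ((1+a-b)_n (1+a-c)_n)
   evaluated at a = x + n + 1/2, b = x/2 + n + 1 + del, c = x/2 + n + 1 + eps in the ring
   F[eps, del]/(eps^2, del^2).  There
     u + s eps + t del = u (1 + s/u eps) (1 + t/u del) (1 - st/u^2 eps del),
   so each Pochhammer symbol becomes p (1 + al eps) (1 + be del) (1 + ga eps del) with al, be
   harmonic sums and ga a second-order harmonic sum, and the eps*del coefficient of such a
   product is p (al be + ga).  On the left, H_k(x/2) + H_k((x-1)/2) = 2 H_2k(x) produces H_2k(x)^2.
   Dougall's sum holds over any commutative ring in which the relevant factors are units, by the
   WZ method: for fixed a, b, c the terms satisfy den(n) T(n+1,k) - num(n) T(n,k) = G(k+1) - G(k)
   with an explicit polynomial certificate G, and the right-hand side obeys the same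
   first-order recurrence den(n) W(n+1) = num(n) W(n). *)

Section DualNumbers.
Variable R : comUnitRingType.

Definition dual := (R * R)%type.
HB.instance Definition _ := Choice.on dual.
HB.instance Definition _ := GRing.Zmodule.on dual.

Definition dual_mul (x y : dual) : dual := (x.1 * y.1, x.1 * y.2 + x.2 * y.1).
Definition dual_one : dual := (1, 0).

Lemma dual_mulA : associative dual_mul.
Proof. by move=> [a b] [c d] [e f]; congr (_, _) => /=; ring. Qed.
Lemma dual_mulC : commutative dual_mul.
Proof. by move=> [a b] [c d]; congr (_, _) => /=; ring. Qed.
Lemma dual_mul1 : left_id dual_one dual_mul.
Proof. by move=> [a b]; congr (_, _) => /=; ring. Qed.
Lemma dual_mulDl : left_distributive dual_mul +%R.
Proof. by move=> [a b] [c d] [e f]; congr (_, _) => /=; ring. Qed.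
Lemma dual_one_neq0 : dual_one != 0.
Proof. by apply/eqP => -[] /eqP; rewrite oner_eq0. Qed.

HB.instance Definition _ := GRing.Zmodule_isComNzRing.Build dual
  dual_mulA dual_mulC dual_mul1 dual_mulDl dual_one_neq0.

Definition dual_unit : {pred dual} := fun x => x.1 \is a GRing.unit.
Definition dual_inv (x : dual) : dual :=
  if x.1 \is a GRing.unit then (x.1^-1, - (x.2 * x.1^-1 ^+ 2)) else x.

Lemma dual_mulVx : {in dual_unit, left_inverse 1 dual_inv *%R}.
Proof.
move=> [a b] ua; have {}ua : a \is a GRing.unit := ua.
rewrite /dual_inv /= ua; congr (_, _) => /=; first exact: mulVr.
by rewrite expr2 mulNr -!mulrA mulVr // mulr1 mulrC subrr.
Qed.

Lemma dual_unitPl (x y : dual) : y * x = 1 -> dual_unit x.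
Proof. by case: x y => [a b] [c d] [cb1 _]; apply/unitrPr; exists c; rewrite mulrC. Qed.

Lemma dual_inv_out : {in [predC dual_unit], dual_inv =1 id}.
Proof.
by move=> [a b] nua; have {}nua : a \isn't a GRing.unit := nua; rewrite /dual_inv /= (negbTE nua).
Qed.

HB.instance Definition _ := GRing.ComNzRing_hasMulInverse.Build dual
  dual_mulVx dual_unitPl dual_inv_out.

Lemma dual_unitE (x : dual) : (x \is a GRing.unit) = (x.1 \is a GRing.unit).
Proof. by []. Qed.

End DualNumbers.

Section Pochhammer.
Variable R : comUnitRingType.

Definition poch (z : R) (k : nat) : R := \prod_(i < k) (z + i%:R).

Lemma poch0 z : poch z 0 = 1.
Proof. exact: big_ord0. Qed.

Lemma pochS z k : poch z k.+1 = poch z k * (z + k%:R).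
Proof. exact: big_ord_recr. Qed.

Lemma pochSl z k : poch z k.+1 = z * poch (z + 1) k.
Proof.
rewrite /poch big_ord_recl addr0; congr (_ * _); apply: eq_bigr => i _.
by rewrite lift0 -natr1; ring.
Qed.

Lemma poch_unit z k :
  (forall i, (i < k)%N -> z + i%:R \is a GRing.unit) -> poch z k \is a GRing.unit.
Proof.
elim: k => [|k IHk] zi_unit; first by rewrite poch0 unitr1.
by rewrite pochS unitrM IHk ?zi_unit // => i /ltnW; apply: zi_unit.
Qed.

End Pochhammer.

Section Dougall.
Variables (R : comUnitRingType) (a b c : R).

Definition dougall_den (n : R) := (1 + a - b - c + n) * (1 + a - b + n) * (1 + a - c + n).

Definition dougall_num (n : R) :=
  (a - n - 1) * (1 + a - b - c + 2%:R * n) * (2%:R + a - b - c + 2%:R * n).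

Definition wz_poly (n k : R) :=
  (a - n - 1) * ((2%:R + a - b - c + 2%:R * n)
      * (k * (k + b + c - 3%:R * n - 3%:R) + (b - 2%:R * n - 2%:R) * (c - 2%:R * n - 2%:R))
    - (n + 1) * ((b - 2%:R * n - 2%:R) * (c - 2%:R * n - 2%:R) + (a - n - 1) * (n + 1))).

Definition dougall_num_prod (n k : nat) :=
  poch (a - n%:R) k * poch (b - n%:R) k * poch (c - n%:R) k.

Definition dougall_den_prod (k : nat) := poch a k.+1 * poch (1 + a - b) k * poch (1 + a - c) k.

Definition dougall_coef (n k : nat) :=
  (-1) ^+ k * 'C(n, k)%:R * dougall_num_prod n k / dougall_den_prod k.

Definition dougall_term (n k : nat) := (a - n%:R + 2%:R * k%:R) * dougall_coef n k.

Definition dougall_rhs (n : nat) :=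
  poch (a - n%:R) n * poch (1 + a - b - c + n%:R) n / (poch (1 + a - b) n * poch (1 + a - c) n).

Definition wz_cert (n k : nat) :=
  if k is j.+1 then dougall_coef n j * wz_poly n%:R k%:R else 0.

Lemma dougall_coef0 n : dougall_coef n 0 = a^-1.
Proof.
by rewrite /dougall_coef /dougall_num_prod /dougall_den_prod pochS !poch0 bin0 !mul1r !mulr1 addr0.
Qed.

Lemma dougall_coef_small n k : (n < k)%N -> dougall_coef n k = 0.
Proof. by move=> lt_nk; rewrite /dougall_coef bin_small // mulr0 !mul0r. Qed.

Lemma dougall_coefS n j : dougall_coef n j.+1 =
  - ((-1) ^+ j * dougall_num_prod n j)
  * ('C(n, j.+1)%:R * ((a - n%:R + j%:R) * (b - n%:R + j%:R) * (c - n%:R + j%:R)))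
  / dougall_den_prod j.+1.
Proof. by rewrite /dougall_coef /dougall_num_prod !pochS exprS; ring. Qed.

Lemma dougall_coefSS n j : dougall_coef n.+1 j.+1 =
  - ((-1) ^+ j * dougall_num_prod n j)
  * (('C(n, j.+1) + 'C(n, j))%:R * ((a - n%:R - 1) * (b - n%:R - 1) * (c - n%:R - 1)))
  / dougall_den_prod j.+1.
Proof.
have shift (z : R) : z - n.+1%:R + 1 = z - n%:R by rewrite -natr1; ring.
by rewrite /dougall_coef /dougall_num_prod binS !pochSl !shift exprS -natr1; ring.
Qed.

Variable N : nat.
Hypothesis a_unit : forall j, (j <= N)%N -> a + j%:R \is a GRing.unit.
Hypothesis ab_unit : forall j, (j < N)%N -> 1 + a - b + j%:R \is a GRing.unit.
Hypothesis ac_unit : forall j, (j < N)%N -> 1 + a - c + j%:R \is a GRing.unit.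
Hypothesis abc_unit : forall j, (j < N)%N -> 1 + a - b - c + j%:R \is a GRing.unit.
Hypothesis nat_unit : forall k, (0 < k)%N -> k%:R \is a @GRing.unit R.

Lemma dougall_den_prod_unit k : (k <= N)%N -> dougall_den_prod k \is a GRing.unit.
Proof.
move=> le_kN; rewrite !unitrM !poch_unit // => i lt_ik.
- by apply: ac_unit; apply: leq_trans le_kN.
- by apply: ab_unit; apply: leq_trans le_kN.
- by apply: a_unit; apply: leq_trans le_kN.
Qed.

Lemma dougall_coef_den n j : (j < N)%N -> dougall_coef n j =
  ((-1) ^+ j * dougall_num_prod n j)
  * ('C(n, j)%:R * ((a + j.+1%:R) * (1 + a - b + j%:R) * (1 + a - c + j%:R)))
  / dougall_den_prod j.+1.
Proof.
move=> lt_jN; set e := _ * (1 + a - c + _).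
have e_unit : e \is a GRing.unit by rewrite !unitrM a_unit ?ab_unit ?ac_unit.
have -> : dougall_den_prod j.+1 = dougall_den_prod j * e.
  by rewrite /dougall_den_prod /e !pochS; ring.
transitivity ((-1) ^+ j * dougall_num_prod n j * 'C(n, j)%:R * (e / e) / dougall_den_prod j).
  by rewrite mulrV // mulr1 /dougall_coef; ring.
by rewrite [in RHS]invrM ?dougall_den_prod_unit 1?ltnW //; ring.
Qed.

Lemma binomial_ratio n j : (j <= n)%N -> exists2 C : R,
  'C(n, j.+1)%:R = (n%:R - j%:R) * C & 'C(n, j)%:R = j.+1%:R * C.
Proof.
move=> le_jn; have j1_unit := nat_unit (ltn0Sn j).
exists (j.+1%:R^-1 * 'C(n, j)%:R); last by rewrite mulVKr.
have := congr1 (GRing.natmul (1 : R)) (mul_bin_left n j).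
by rewrite !natrM natrB // mulrCA => /(canRL (mulKr j1_unit)).
Qed.

Lemma dougall_step n k : (n < N)%N -> (k <= n.+1)%N ->
  dougall_den n%:R * dougall_term n.+1 k - dougall_num n%:R * dougall_term n k
  = wz_cert n k.+1 - wz_cert n k.
Proof.
move=> lt_nN; case: k => [_|j le_jn].
  by rewrite /dougall_term /wz_cert !dougall_coef0 /dougall_den /dougall_num /wz_poly; ring.
rewrite /dougall_term /wz_cert dougall_coefSS natrD.
rewrite dougall_coefS (dougall_coef_den _ (leq_ltn_trans (n := n) le_jn lt_nN)).
(* Expressing both binomials through one C turns the step into a polynomial identity. *)
have [C -> ->] := binomial_ratio (n := n) (j := j) le_jn.
by rewrite /dougall_den /dougall_num /wz_poly -!natr1; ring.
Qed.

Lemma dougall_rhsS n : (n < N)%N ->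
  dougall_den n%:R * dougall_rhs n.+1 = dougall_num n%:R * dougall_rhs n.
Proof.
move=> lt_nN.
have pbc_unit : poch (1 + a - b) n * poch (1 + a - c) n \is a GRing.unit.
  by rewrite unitrM !poch_unit // => i /ltn_trans/(_ lt_nN) lt_iN;
    [exact: ac_unit | exact: ab_unit].
have ebc_unit : (1 + a - b + n%:R) * (1 + a - c + n%:R) \is a GRing.unit.
  by rewrite unitrM ab_unit ?ac_unit.
have poch_abc : (1 + a - b - c + n%:R) * poch (1 + a - b - c + n.+1%:R) n.+1
    = poch (1 + a - b - c + n%:R) n
      * (1 + a - b - c + 2%:R * n%:R) * (2%:R + a - b - c + 2%:R * n%:R).
  by rewrite -natr1 addrA -pochSl !pochS -!natr1; ring.
have poch_a : poch (a - n.+1%:R) n.+1 = (a - n%:R - 1) * poch (a - n%:R) n.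
  have shift : a - n.+1%:R + 1 = a - n%:R by rewrite -natr1; ring.
  by rewrite pochSl shift -natr1; ring.
rewrite /dougall_rhs poch_a (pochS (1 + a - b)) (pochS (1 + a - c)).
have -> : poch (1 + a - b) n * (1 + a - b + n%:R) * (poch (1 + a - c) n * (1 + a - c + n%:R))
    = (poch (1 + a - b) n * poch (1 + a - c) n)
      * ((1 + a - b + n%:R) * (1 + a - c + n%:R)) by ring.
rewrite invrM //.
transitivity (((1 + a - b + n%:R) * (1 + a - c + n%:R)) / ((1 + a - b + n%:R) * (1 + a - c + n%:R))
    * ((1 + a - b - c + n%:R) * poch (1 + a - b - c + n.+1%:R) n.+1)
    * ((a - n%:R - 1) * poch (a - n%:R) n) / (poch (1 + a - b) n * poch (1 + a - c) n)).
  by rewrite /dougall_den; ring.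
by rewrite mulrV // mul1r poch_abc /dougall_num; ring.
Qed.

Theorem dougall_sum : \sum_(k < N.+1) dougall_term N k = dougall_rhs N.
Proof.
suff: forall n, (n <= N)%N -> \sum_(k < n.+1) dougall_term n k = dougall_rhs n by apply.
elim=> [_ | n IHn lt_nN].
  rewrite big_ord1 /dougall_term dougall_coef0 /dougall_rhs !poch0 subr0 mulr0 addr0.
  have a0_unit : a \is a GRing.unit by have := a_unit (leq0n N); rewrite addr0.
  by rewrite mulrV // !mul1r invr1.
have telescope : dougall_den n%:R * \sum_(k < n.+2) dougall_term n.+1 k
    - dougall_num n%:R * \sum_(k < n.+2) dougall_term n k = 0.
  rewrite !mulr_sumr -sumrB -(big_mkord xpredT (fun k =>
    dougall_den n%:R * dougall_term n.+1 k - dougall_num n%:R * dougall_term n k)).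
  rewrite (telescope_sumr_eq (wz_cert n)) // => [|k /andP[_ lt_kn]]; last exact: dougall_step.
  by rewrite /wz_cert dougall_coef_small // mul0r subrr.
have den_unit : dougall_den n%:R \is a GRing.unit by rewrite !unitrM abc_unit ?ab_unit ?ac_unit.
apply: (mulrI den_unit); rewrite dougall_rhsS //.
move/eqP: telescope; rewrite subr_eq0 => /eqP ->; congr (_ * _).
by rewrite big_ord_recr /= /dougall_term dougall_coef_small // mulr0 addr0 IHn // ltnW.
Qed.

End Dougall.

Section HarmonicPochhammer.
Variable F : fieldType.

Lemma poch_neq0 (u : F) k : (forall i, (i < k)%N -> u + i%:R != 0) -> poch u k != 0.
Proof. by move=> ui_neq0; apply/prodf_neq0 => i _; apply: ui_neq0. Qed.

Lemma gbinom_poch (z : F) k : gbinom (z + k%:R) k = poch (z + 1) k / k`!%:R.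
Proof.
rewrite /gbinom /poch; congr (_ / _).
rewrite (reindex_inj rev_ord_inj); apply: eq_bigr => i _.
by rewrite /= natrB ?ltn_ord // -natr1; ring.
Qed.

Lemma HsumS m (z : F) : Hsum m.+1 z = Hsum m z + (z + m.+1%:R)^-1.
Proof. by rewrite /Hsum big_nat_recr. Qed.

Lemma Hsum2S m (z : F) : Hsum2 m.+1 z = Hsum2 m z + ((z + m.+1%:R) ^+ 2)^-1.
Proof. by rewrite /Hsum2 big_nat_recr. Qed.

Lemma Hsum_double (x : F) k : (2%:R : F) != 0 ->
  Hsum (2 * k) x = (Hsum k (x / 2%:R) + Hsum k ((x - 1) / 2%:R)) / 2%:R.
Proof.
move=> two_neq0; elim: k => [|k IHk]; first by rewrite /Hsum !big_geq // addr0 mul0r.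
have half (y : F) m : (y / 2%:R + m.+1%:R)^-1 / 2%:R = (y + (2 * m).+2%:R)^-1.
  by rewrite -invfM; congr _^-1; rewrite -(addn2 (2 * m)) natrD natrM -natr1; field.
have -> : (2 * k.+1 = (2 * k).+2)%N by rewrite mulnS.
rewrite !HsumS IHk -[(x + (2 * k).+2%:R)^-1]half.
have -> : x + (2 * k).+1%:R = (x - 1) + (2 * k).+2%:R by rewrite -!natr1; ring.
by rewrite -half; ring.
Qed.

End HarmonicPochhammer.

Section SecondOrderDual.
Variable F : fieldType.
Local Notation D2 := (dual (dual F)).

Lemma dual2_ext (z w : D2) :
  z.1.1 = w.1.1 -> z.1.2 = w.1.2 -> z.2.1 = w.2.1 -> z.2.2 = w.2.2 -> z = w.
Proof. by case: z w => [[? ?] [? ?]] [[? ?] [? ?]] /= -> -> -> ->. Qed.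

(* ((a, b), (c, d)) : D2 stands for a + b eps + c del + d eps del; thus [lin u s t] is
   u + s eps + t del and [dexp p al be ga] is p (1 + al eps) (1 + be del) (1 + ga eps del). *)
Definition lin (u s t : F) : D2 := ((u, s), (t, 0)).

Definition dexp (p al be ga : F) : D2 := ((p, p * al), (p * be, p * (al * be + ga))).

Lemma lin1 : 1 = lin 1 0 0.
Proof. by []. Qed.

Lemma linD u s t u' s' t' : lin u s t + lin u' s' t' = lin (u + u') (s + s') (t + t').
Proof. by apply: dual2_ext => /=; rewrite ?addr0. Qed.

Lemma linN u s t : - lin u s t = lin (- u) (- s) (- t).
Proof. by apply: dual2_ext => /=; rewrite ?oppr0. Qed.

Lemma lin_nat m : m%:R = lin m%:R 0 0.
Proof. by elim: m => [|m IHm] //; rewrite -[LHS]natr1 IHm lin1 linD !addr0 natr1. Qed.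

Lemma lin_dexp u s t : u != 0 -> lin u s t = dexp u (s / u) (t / u) (- (s * t) / u ^+ 2).
Proof. by move=> b_neq0; apply: dual2_ext => /=; field. Qed.

Lemma lin_const u : lin u 0 0 = dexp u 0 0 0.
Proof. by apply: dual2_ext => /=; ring. Qed.

Lemma dexpM p al be ga p' al' be' ga' :
  dexp p al be ga * dexp p' al' be' ga' = dexp (p * p') (al + al') (be + be') (ga + ga').
Proof. by apply: dual2_ext => /=; ring. Qed.

Lemma dexp1 : dexp 1 0 0 0 = 1.
Proof. by apply: dual2_ext => /=; ring. Qed.

Lemma dexpX p al be ga k :
  dexp p al be ga ^+ k = dexp (p ^+ k) (al *+ k) (be *+ k) (ga *+ k).
Proof.
elim: k => [|k IHk]; first by rewrite expr0 dexp1.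
by rewrite exprS IHk dexpM -exprS !mulrS.
Qed.

Lemma dexpV p al be ga : p != 0 ->
  (dexp p al be ga)^-1 = dexp p^-1 (- al) (- be) (- ga).
Proof. by move=> p_neq0; apply: mulr1_eq; rewrite dexpM mulfV // !subrr dexp1. Qed.

Lemma lin_unit u s t : (lin u s t \is a GRing.unit) = (u != 0).
Proof. by rewrite !dual_unitE unitfE. Qed.

Definition mixed_part (z : D2) : F := z.2.2.

Lemma mixed_part_dexp p al be ga : mixed_part (dexp p al be ga) = p * (al * be + ga).
Proof. by []. Qed.

Lemma mixed_part_sum (I : Type) (r : seq I) (P : pred I) (f : I -> D2) :
  mixed_part (\sum_(i <- r | P i) f i) = \sum_(i <- r | P i) mixed_part (f i).
Proof. exact: (big_morph mixed_part (fun _ _ => erefl) (erefl _)). Qed.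

Lemma poch_const u k : poch (lin u 0 0) k = dexp (poch u k) 0 0 0.
Proof.
elim: k => [|k IHk]; first by rewrite !poch0 dexp1.
by rewrite !pochS IHk lin_nat linD !addr0 lin_const dexpM !addr0.
Qed.

Lemma poch_lin (z s t : F) k : (forall j, (1 <= j <= k)%N -> z + j%:R != 0) ->
  poch (lin (z + 1) s t) k
  = dexp (poch (z + 1) k) (s * Hsum k z) (t * Hsum k z) (- (s * t) * Hsum2 k z).
Proof.
elim: k => [|k IHk] zj_neq0.
  by rewrite !poch0 /Hsum /Hsum2 !big_geq // !mulr0 dexp1.
have zk_neq0 : z + k.+1%:R != 0 by apply: zj_neq0; rewrite ltnS leqnn.
rewrite !pochS IHk => [|j /andP[j_gt0 le_jk]]; last by rewrite zj_neq0 // j_gt0 ltnW.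
rewrite lin_nat linD !addr0.
have -> : z + 1 + k%:R = z + k.+1%:R by rewrite -natr1; ring.
rewrite (lin_dexp _ _ zk_neq0) dexpM HsumS Hsum2S.
by congr dexp; ring.
Qed.

End SecondOrderDual.

Lemma half_shift_neq0 (F : numFieldType) (m k : nat) : m%:R - k%:R - 2%:R^-1 != 0 :> F.
Proof.
apply/eqP => /(congr1 (fun y => 2%:R * y)).
have -> : 2%:R * (m%:R - k%:R - 2%:R^-1) = (2 * m)%:R - (2 * k).+1%:R :> F.
  by rewrite !natrM -natr1; field.
by rewrite mulr0 => /eqP; rewrite subr_eq0 eqr_nat; lia.
Qed.

Section Specialization.
Variables (F : numFieldType) (x : F) (n : nat).
Hypothesis hfrac : forall k : nat, (k <= n)%N ->
  1 + 2%:R * x + 2%:R * n%:R + 2%:R * k%:R != 0.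
Hypothesis hH : forall j : nat, (1 <= j <= 2 * n)%N -> x + j%:R != 0.
Hypothesis hHn : forall j : nat, (1 <= j <= n)%N -> (x - 1) / 2%:R + j%:R != 0.

Local Notation a := (lin (x - 2%:R^-1 + n%:R + 1) 0 0).
Local Notation b := (lin (x / 2%:R + n%:R + 1) 0 1).
Local Notation c := (lin (x / 2%:R + n%:R + 1) 1 0).

Let two_neq0 : (2%:R : F) != 0. Proof. by rewrite pnatr_eq0. Qed.

Lemma param_a_n : a - n%:R = lin (x - 2%:R^-1 + 1) 0 0.
Proof. by rewrite lin_nat linN linD; congr lin; ring. Qed.

Lemma param_b_n : b - n%:R = lin (x / 2%:R + 1) 0 1.
Proof. by rewrite lin_nat linN linD; congr lin; ring. Qed.

Lemma param_c_n : c - n%:R = lin (x / 2%:R + 1) 1 0.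
Proof. by rewrite lin_nat linN linD; congr lin; ring. Qed.

Lemma param_ab : 1 + a - b = lin ((x - 1) / 2%:R + 1) 0 (-1).
Proof. by rewrite lin1 linN !linD; congr lin; field. Qed.

Lemma param_ac : 1 + a - c = lin ((x - 1) / 2%:R + 1) (-1) 0.
Proof. by rewrite lin1 linN !linD; congr lin; field. Qed.

Lemma param_abc m : 1 + a - b - c + m%:R = lin (m%:R - n%:R - 2%:R^-1) (-1) (-1).
Proof. by rewrite lin1 lin_nat !linN !linD; congr lin; field. Qed.

Lemma a_shift_neq0 j : (j <= n)%N -> x - 2%:R^-1 + n%:R + 1 + j%:R != 0.
Proof.
move=> /hfrac; apply: contra => /eqP eq0; apply/eqP.
have -> : 1 + 2%:R * x + 2%:R * n%:R + 2%:R * j%:R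
  = 2%:R * (x - 2%:R^-1 + n%:R + 1 + j%:R) by field.
by rewrite eq0 mulr0.
Qed.

Lemma b_shift_neq0 j : (1 <= j <= n)%N -> x / 2%:R + j%:R != 0.
Proof.
move=> /andP[j_gt0 le_jn]; have : (1 <= 2 * j <= 2 * n)%N by apply/andP; split; lia.
move=> /hH; apply: contra => /eqP eq0; apply/eqP.
have -> : x + (2 * j)%:R = 2%:R * (x / 2%:R + j%:R) by rewrite natrM; field.
by rewrite eq0 mulr0.
Qed.

Lemma dougall_sum_spec : \sum_(k < n.+1) dougall_term a b c n k = dougall_rhs a b c n.
Proof.
apply: dougall_sum => [j le_jn | j lt_jn | j lt_jn | j lt_jn | k k_gt0].
- by rewrite lin_nat linD !addr0 lin_unit a_shift_neq0.
- rewrite param_ab lin_nat linD !addr0 lin_unit -addrA nat1r.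
  by apply: hHn; rewrite ltn0Sn.
- rewrite param_ac lin_nat linD !addr0 lin_unit -addrA nat1r.
  by apply: hHn; rewrite ltn0Sn.
- by rewrite param_abc lin_unit half_shift_neq0.
- by rewrite lin_nat lin_unit pnatr_eq0 -lt0n.
Qed.

Lemma dougall_term_mixed k : (k <= n)%N ->
  mixed_part (dougall_term a b c n k) = 4%:R * ((-1) ^+ k * ('C(n, k))%:R
     * ((gbinom (x / 2%:R + k%:R) k) ^+ 2 * gbinom (x - 2%:R^-1 + k%:R) k)
     / ((gbinom ((x - 1) / 2%:R + k%:R) k) ^+ 2
        * gbinom (x - 2%:R^-1 + n%:R + k%:R) k)
     * ((1 + 2%:R * x + 4%:R * k%:R) / (1 + 2%:R * x + 2%:R * n%:R + 2%:R * k%:R))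
     * (Hsum (2 * k) x) ^+ 2).
Proof.
move=> le_kn.
have b_neq0 j : (1 <= j <= k)%N -> x / 2%:R + j%:R != 0.
  by case/andP=> j_gt0 le_jk; rewrite b_shift_neq0 // j_gt0 (leq_trans le_jk).
have ab_neq0 j : (1 <= j <= k)%N -> (x - 1) / 2%:R + j%:R != 0.
  by case/andP=> j_gt0 le_jk; rewrite hHn // j_gt0 (leq_trans le_jk).
rewrite /dougall_term /dougall_coef /dougall_num_prod /dougall_den_prod.
rewrite param_a_n param_b_n param_c_n param_ab param_ac !poch_const !poch_lin //.
rewrite -natrM !lin_nat linD !addr0 lin1 linN oppr0 !lin_const dexpX !mul0rn.
have pa_neq0 : poch (x - 2%:R^-1 + n%:R + 1) k != 0.
  by apply: poch_neq0 => i lt_ik; rewrite a_shift_neq0 // ltnW ?(leq_trans lt_ik).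
have pab_neq0 : poch ((x - 1) / 2%:R + 1) k != 0.
  by apply: poch_neq0 => i lt_ik; rewrite -addrA nat1r ab_neq0.
rewrite !dexpM dexpV; last by rewrite pochS !mulf_neq0 // a_shift_neq0.
rewrite !dexpM mixed_part_dexp !gbinom_poch (Hsum_double _ _ two_neq0) pochS.
by field; rewrite hfrac // pa_neq0 pab_neq0 pnatr_eq0 -lt0n fact_gt0.
Qed.

Lemma dougall_rhs_mixed : mixed_part (dougall_rhs a b c n)
  = 4%:R * (4%:R^-1 * (gbinom (x - 2%:R^-1 + n%:R) n * gbinom (- (3%:R / 2%:R) + n%:R) n)
      / (gbinom ((x - 1) / 2%:R + n%:R) n) ^+ 2
    * ((Hsum n ((x - 1) / 2%:R) - Hsum n (- (3%:R / 2%:R))) ^+ 2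
       - Hsum2 n (- (3%:R / 2%:R)))).
Proof.
have abc_neq0 j : (1 <= j <= n)%N -> - (3%:R / 2%:R) + j%:R != 0 :> F.
  move=> _; have -> : - (3%:R / 2%:R) + j%:R = j%:R - 1%:R - 2%:R^-1 :> F by field.
  exact: half_shift_neq0.
have pab_neq0 : poch ((x - 1) / 2%:R + 1) n != 0.
  by apply: poch_neq0 => i lt_in; rewrite -addrA nat1r hHn.
rewrite /dougall_rhs param_a_n param_abc param_ab param_ac.
have -> : n%:R - n%:R - 2%:R^-1 = - (3%:R / 2%:R) + 1 :> F by field.
rewrite poch_const !poch_lin //.
rewrite !dexpM dexpV ?mulf_neq0 // !dexpM mixed_part_dexp !gbinom_poch.
by field; rewrite pab_neq0 pnatr_eq0 -lt0n fact_gt0.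
Qed.

End Specialization.

Local Open Scope complex_scope.

Theorem theorem8 (R : realType) (n : nat) (x : R[i])
  (hbin1 : forall k : nat, (k <= n)%N -> gbinom ((x - 1) / 2%:R + k%:R) k != 0)
  (hbin2 : forall k : nat, (k <= n)%N ->
     gbinom (x - 2%:R^-1 + n%:R + k%:R) k != 0)
  (hfrac : forall k : nat, (k <= n)%N ->
     1 + 2%:R * x + 2%:R * n%:R + 2%:R * k%:R != 0)
  (hH : forall j : nat, (1 <= j <= 2 * n)%N -> x + j%:R != 0)
  (hHn : forall j : nat, (1 <= j <= n)%N -> (x - 1) / 2%:R + j%:R != 0) :
  \sum_(0 <= k < n.+1)
     (-1) ^+ k * ('C(n, k))%:R
     * ((gbinom (x / 2%:R + k%:R) k) ^+ 2 * gbinom (x - 2%:R^-1 + k%:R) k)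
     / ((gbinom ((x - 1) / 2%:R + k%:R) k) ^+ 2
        * gbinom (x - 2%:R^-1 + n%:R + k%:R) k)
     * ((1 + 2%:R * x + 4%:R * k%:R) / (1 + 2%:R * x + 2%:R * n%:R + 2%:R * k%:R))
     * (Hsum (2 * k) x) ^+ 2
  = 4%:R^-1 * (gbinom (x - 2%:R^-1 + n%:R) n * gbinom (- (3%:R / 2%:R) + n%:R) n)
      / (gbinom ((x - 1) / 2%:R + n%:R) n) ^+ 2
    * ((Hsum n ((x - 1) / 2%:R) - Hsum n (- (3%:R / 2%:R))) ^+ 2
       - Hsum2 n (- (3%:R / 2%:R))).
Proof.
have four_neq0 : (4%:R : R[i]) != 0 by rewrite pnatr_eq0.
have := congr1 (@mixed_part _) (dougall_sum_spec hfrac hHn).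
rewrite mixed_part_sum (dougall_rhs_mixed hHn).
rewrite (eq_bigr _ (fun k _ => dougall_term_mixed hfrac hH hHn (leq_ord k))).
by rewrite -mulr_sumr big_mkord => /(mulfI four_neq0).
Qed.
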